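(* Let $H=(V,E)$ be a hypergraph whose vertex set $V$ is a partition of $[n]$ into sets of cardinality at least $2$, and let $D=\{\bar i_I\}_{I\in V}$ with $\bar i_I\in I$ for each $I\in V$. Then $\mathrm{MC}^H_\le(D)$ is full-dimensional in $\mathbb{R}^{\mathcal{J}^H_\le(D)}$.
   Context: Let $n$ be a positive integer, $[n]=\{1,\dots,n\}$. A hypergraph $H=(V,E)$ here has as vertex set $V$ a family of pairwise disjoint subsets of $[n]$, each of cardinality at least $2$, and hyperedge set $E$ consisting of subsets $e\subseteq V$ with $|e|\ge 2$. Write $L(V)=\{\{I\}: I\in V\}$. For a nonempty $e\subseteq V$, $\mathcal{J}^e$ denotes the family of sets $J\subseteq \bigcup_{I\in e} I$ with $|J\cap I|=1$ for every $I\in e$. Let $\mathcal{J}^H=\bigcup_{e\in L(V)\cup E}\mathcal{J}^e$. For a vector $v$ indexed by sets, write $v_i=v_{\{i\}}$ and $v(A)=\sum_{i\in A}v_i$. For $D$ as in the claim, $\mathcal{J}^H_\le(D)=\{J\in\mathcal{J}^H: J\subseteq[n]\setminus D\}$ and $\mathrm{MC}^H_\le(D)=\operatorname{conv}\{v\in\{0,1\}^{\mathcal{J}^H_\le(D)}: v(I\setminus D)\le 1\ \forall I\in V;\ v_J=\prod_{i\in J}v_i\ \forall J\in\mathcal{J}^H_\le(D), |J|>1\}$. *)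

From HB Require Import structures.
From mathcomp Require Import all_boot all_order all_algebra.
From mathcomp Require Import reals.
Set Implicit Arguments. Unset Strict Implicit. Unset Printing Implicit Defensive.
Import Order.TTheory GRing.Theory Num.Theory.
Local Open Scope ring_scope.

(* [n] is modelled as 'I_n = {0,...,n-1}. *)
Section Defs.
Variable n : nat.

Definition Jfam (e : {set {set 'I_n}}) : {set {set 'I_n}} :=
  [set J : {set 'I_n} | (J \subset \bigcup_(I in e) I) &&
                        [forall I in e, #|J :&: I| == 1%N]].

Definition LV (V : {set {set 'I_n}}) : {set {set {set 'I_n}}} :=
  [set [set I] | I in V].

Definition JH (V : {set {set 'I_n}}) (E : {set {set {set 'I_n}}}) :
  {set {set 'I_n}} := \bigcup_(e in LV V :|: E) Jfam e.

Definition JHle (V : {set {set 'I_n}}) (E : {set {set {set 'I_n}}})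
  (D : {set 'I_n}) : {set {set 'I_n}} := [set J in JH V E | J \subset ~: D].

Definition Jidx V E D : finType := {J : {set 'I_n} | J \in JHle V E D}.

Variable R : realType.

(* the coordinate v_J of v in R^{J^H_<=(D)} (0 if J is not an index) *)
Definition coord V E D (v : {ffun Jidx V E D -> R}) (J : {set 'I_n}) : R :=
  match insub J with Some j => v j | None => 0 end.

Definition MCpoints V E D (v : {ffun Jidx V E D -> R}) : Prop :=
  [/\ (forall j, v j = 0 \/ v j = 1),
      (forall I, I \in V -> \sum_(i in I :\: D) coord v [set i] <= 1) &
      (forall j : Jidx V E D, (1 < #|val j|)%N ->
          v j = \prod_(i in val j) coord v [set i])].
End Defs.

Section Hulls.
Variables (R : realType) (W : lmodType R).

Definition conv (S : W -> Prop) : W -> Prop :=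
  fun x => exists (k : nat) (p : 'I_k -> W) (l : 'I_k -> R),
    [/\ (forall i, S (p i)), (forall i, 0 <= l i), \sum_i l i = 1 &
        x = \sum_i l i *: p i].

Definition aff (S : W -> Prop) : W -> Prop :=
  fun x => exists (k : nat) (p : 'I_k -> W) (l : 'I_k -> R),
    [/\ (forall i, S (p i)), \sum_i l i = 1 & x = \sum_i l i *: p i].

Definition full_dimensional (S : W -> Prop) : Prop := forall y, aff S y.
End Hulls.

Definition Rspace (n : nat) (R : realType) V E D : lmodType R :=
  {ffun @Jidx n V E D -> R^o}.

Definition MC (n : nat) (R : realType) V E D : Rspace R V E D -> Prop :=
  conv (fun v : Rspace R V E D => @MCpoints n R V E D v).

From Pilot Require Import Defs.
From HB Require Import structures.
From mathcomp Require Import all_boot all_order all_algebra.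
From mathcomp Require Import reals.
Import Order.TTheory GRing.Theory Num.Theory.
Local Open Scope ring_scope.

(* For every coordinate K of the ambient space, the 0/1 point with v_J = [J \subset K]
   is a point of MC: it is the multilinear lift of the indicator of K, and K meets
   each block of the partition at most once.  These points are unitriangular over
   the standard basis for inclusion, so by induction on #|K| they span the space;
   since the origin is also a point of MC, their affine hull is everything.  The
   block constraint is an inequality. *)

Lemma aff_span (R : realType) (vT : vectType R) (S : vT -> Prop) (X : seq vT) v :
  S 0 -> (forall x, x \in X -> S x) -> v \in <<X>>%VS -> aff S v.
Proof.
move=> S0 SX /(@coord_span _ _ _ (in_tuple X)) ->.
pose c j := coord (in_tuple X) j v.
exists (size X).+1, (fun i => oapp (tnth (in_tuple X)) 0 (unlift ord0 i)),
  (fun i => oapp c (1 - \sum_j c j) (unlift ord0 i)).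
split=> [i | | ]; rewrite ?big_ord_recl ?unlift_none /=.
- by case: (unlift ord0 i) => [j|] //=; apply/SX/mem_tnth.
- by rewrite [Y in _ + Y](eq_bigr c) ?subrK // => j _; rewrite liftK.
- by rewrite scaler0 add0r; apply: eq_bigr => j _; rewrite liftK /= (tnth_nth 0).
Qed.

Lemma sumr_indicator (R : pzSemiRingType) (T : finType) (A B : {pred T}) :
  \sum_(i in A) (i \in B)%:R = #|[predI A & B]|%:R :> R.
Proof. by rewrite -natr_sum -sum1_card big_mkcondr. Qed.

Lemma prodr_indicator (R : comPzSemiRingType) (T : finType) (A B : {pred T}) :
  \prod_(i in A) (i \in B)%:R = (A \subset B)%:R :> R.
Proof.
case: (boolP (A \subset B)) => [/subsetP AB | /subsetPn[i iA iB]].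
  by rewrite big1 // => i /AB ->.
by rewrite (bigD1 i) //= (negbTE iB) mul0r.
Qed.

Lemma sub_conv (R : realType) (W : lmodType R) (S : W -> Prop) x : S x -> conv S x.
Proof.
by move=> Sx; exists 1%N, (fun=> x), (fun=> 1); split; rewrite ?big_ord1 ?scale1r.
Qed.

Section Vertices.
Variables (n : nat) (V : {set {set 'I_n}}) (E : {set {set {set 'I_n}}}) (D : {set 'I_n}).
Hypothesis partV : partition V [set: 'I_n].
Hypothesis E_subV : forall e, e \in E -> e \subset V.

Local Notation idx := (Jidx V E D).

Lemma idx_subsetC (j : idx) : val j \subset ~: D.
Proof. by case: j => J /=; rewrite inE => /andP[]. Qed.

Lemma set1_JHle i : i \notin D -> [set i] \in JHle V E D.
Proof.
move=> iD; rewrite inE sub1set inE iD andbT.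
have /bigcupP[I IV iI] : i \in cover V by rewrite (cover_partition partV) inE.
apply/bigcupP; exists [set I]; first by rewrite inE imset_f.
rewrite inE big_set1 sub1set iI; apply/forall_inP => _ /set1P ->.
by rewrite (setIidPl _) ?cards1 // sub1set.
Qed.

Lemma idx_Jfam (j : idx) : exists2 e : {set {set 'I_n}}, e \subset V & val j \in Jfam e.
Proof.
case: j => J /=; rewrite inE => /andP[/bigcupP[e eLE Je] _]; exists e => //.
by case/setUP: eLE => [/imsetP[I IV ->] | /E_subV]; rewrite ?sub1set.
Qed.

Lemma card_idxI_le1 (j : idx) I : I \in V -> (#|val j :&: I| <= 1)%N.
Proof.
move=> IV; have [e eV] := idx_Jfam j; rewrite inE => /andP[Jsub /forall_inP J1].
have [Ie | Ie] := boolP (I \in e); first by rewrite (eqP (J1 _ Ie)).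
suff -> : val j :&: I = set0 by rewrite cards0.
apply/setP => x; rewrite !inE; apply/andP => -[/(subsetP Jsub)/bigcupP[I' I'e xI'] xI].
have I'I : I' != I by apply: contraNneq Ie => <-.
case/and3P: partV => _ /trivIsetP/(_ I' I (subsetP eV _ I'e) IV I'I) + _.
by move/disjointFr/(_ xI'); rewrite xI.
Qed.

Variable R : realType.

Definition vertex (K : idx) : Rspace R V E D :=
  [ffun k : idx => (val k \subset val K)%:R : R^o].

Definition unit_vec (K : idx) : Rspace R V E D := [ffun k : idx => (k == K)%:R : R^o].

Lemma coord_vertex K i : i \notin D -> Defs.coord (vertex K) [set i] = (i \in val K)%:R.
Proof.
by move=> /set1_JHle iJ; rewrite /Defs.coord insubT /= ffunE sub1set.
Qed.

Lemma MCpoints_vertex K : MCpoints (vertex K).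
Proof.
split=> [j | I IV | j _].
- by rewrite ffunE; case: (_ \subset _); [right | left].
- rewrite (eq_bigr (fun i => (i \in val K)%:R)); last first.
    by move=> i; rewrite inE => /andP[iD _]; rewrite coord_vertex.
  rewrite sumr_indicator lern1; apply: leq_trans _ (card_idxI_le1 K I IV).
  by apply: subset_leq_card; apply/subsetP => i; rewrite !inE => /andP[/andP[_ ->] ->].
- rewrite ffunE -prodr_indicator; apply: eq_bigr => i ij.
  by rewrite coord_vertex // -in_setC (subsetP (idx_subsetC j)).
Qed.

Lemma MCpoints0 : MCpoints (0 : Rspace R V E D).
Proof.
have coord0 J : Defs.coord (0 : Rspace R V E D) J = 0.
  by rewrite /Defs.coord; case: insub => [j|]; rewrite ?ffunE.
split=> [j | I _ | j /ltnW/card_gt0P[i ij]]; rewrite ?ffunE; first by left.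
  by rewrite big1.
by rewrite (bigD1 i) //= coord0 mul0r.
Qed.

Lemma vertex_sum_unit_vec K : vertex K = \sum_(J : idx | val J \subset val K) unit_vec J.
Proof.
apply/ffunP => k; rewrite sum_ffunE ffunE big_mkcond (bigD1 k) //= big1 => [|J Jk].
  by rewrite ffunE eqxx addr0; case: ifP.
by rewrite ffunE eq_sym (negbTE Jk) if_same.
Qed.

Lemma unit_vec_in_span K : unit_vec K \in <<codom vertex>>%VS.
Proof.
elim: {K}_.+1 {-2}K (ltnSn #|val K|) => // m IHm K leKm.
have -> : unit_vec K =
    vertex K - \sum_(J : idx | (val J \subset val K) && (J != K)) unit_vec J.
  by rewrite vertex_sum_unit_vec (bigD1 K) //= addrK.
apply: memvB; first exact/memv_span/codom_f.
apply: memv_suml => J /andP[JK JnK].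
apply: IHm; apply: leq_trans (proper_card _) leKm.
by rewrite properEneq JK andbT (inj_eq val_inj).
Qed.

Lemma memv_span_vertices (y : Rspace R V E D) : y \in <<codom vertex>>%VS.
Proof.
have -> : y = \sum_K y K *: unit_vec K.
  apply/ffunP => k; rewrite sum_ffunE (bigD1 k) //= big1 => [|J Jk].
    by rewrite !ffunE eqxx addr0 [RHS]mulr1.
  by rewrite !ffunE eq_sym (negbTE Jk) [LHS]mulr0.
by apply: memv_suml => K _; rewrite memvZ ?unit_vec_in_span.
Qed.

Lemma MC_full_dimensional : full_dimensional (@MC n R V E D).
Proof.
move=> y; apply: aff_span (memv_span_vertices y); first exact/sub_conv/MCpoints0.
by move=> _ /codomP[K ->]; apply/sub_conv/MCpoints_vertex.
Qed.

End Vertices.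

Theorem proposition3p3 (R : realType) (n : nat)
  (V : {set {set 'I_n}}) (E : {set {set {set 'I_n}}})
  (ibar : {set 'I_n} -> 'I_n) :
  (0 < n)%N ->
  partition V [set: 'I_n] ->
  (forall I, I \in V -> (2 <= #|I|)%N) ->
  (forall e, e \in E -> e \subset V /\ (2 <= #|e|)%N) ->
  (forall I, I \in V -> ibar I \in I) ->
  full_dimensional (@MC n R V E [set ibar I | I in V]).
Proof.
by move=> _ partV _ E_subV _; apply: MC_full_dimensional => // e /E_subV[].
Qed.
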